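(* Let $c_m=\binom{2m+1}{m}$ for $m\ge0$. For $n\ge1$ let $P_n(x)$ be the determinant of the $(n+1)\times(n+1)$ matrix with first row $(1,x,x^2,\dots,x^n)$ and row $i+1$ equal to $(c_{i-1},c_i,\dots,c_{i-1+n})$ for $i=1,\dots,n$, and let $P^{(1)}_n(x)$ be the determinant of the $(n+1)\times(n+1)$ matrix with first row $(1,x,\dots,x^n)$ and row $i+1$ equal to $(c_i,c_{i+1},\dots,c_{i+n})$ for $i=1,\dots,n$. Set $t_n(x)=(-1)^nP_n(x)$ and $t^{(1)}_n(x)=\frac{(-1)^n}{2n+1}P^{(1)}_n(x)$. Then for all $n\ge1$: $t_n(4)=1$ and $t^{(1)}_n(4)=\frac{n+1}{2n+1}$. *)

From mathcomp Require Import all_boot all_order all_algebra.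
Set Implicit Arguments. Unset Strict Implicit. Unset Printing Implicit Defensive.
Import GRing.Theory Num.Theory.
Local Open Scope ring_scope.

Definition cc (m : nat) : nat := 'C(m.*2.+1, m).

Definition Pn (n : nat) : {poly rat} :=
  \det (\matrix_(i < n.+1, j < n.+1)
          if i == 0%N :> nat then 'X^j else ((cc (i.-1 + j))%:R)%:P).

Definition P1n (n : nat) : {poly rat} :=
  \det (\matrix_(i < n.+1, j < n.+1)
          if i == 0%N :> nat then 'X^j else ((cc (i + j))%:R)%:P).

Definition tn (n : nat) : {poly rat} := (-1) ^+ n *: Pn n.
Definition t1n (n : nat) : {poly rat} := ((-1) ^+ n / (n.*2.+1)%:R) *: P1n n.

From mathcomp Require Import all_boot all_order all_algebra.
From mathcomp Require Import zify ring.
Set Implicit Arguments. Unset Strict Implicit. Unset Printing Implicit Defensive.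
Import GRing.Theory Num.Theory.
Local Open Scope ring_scope.

(* Subtracting x times each column from the next turns the first row
   (1, x, ..., x^n) into (1, 0, ..., 0), so the determinants reduce to
   n x n Hankel determinants of c_{m+1} - 4 c_m and c_{m+2} - 4 c_{m+1}.
   With the ballot numbers b(i,k) = C(2i+1, i-k) - C(2i+1, i-k-1) one has
   4 c_m - c_{m+1} = b(m,0), and the three-term recurrence
   b(i+1,k) = b(i,k-1) + 2 b(i,k) + b(i,k+1) makes b(m,0) the moments of the
   orthogonal family b(i,.): with L = (b(i,k)) and the Jacobi matrix T
   (2 on the diagonal, 1 beside it) the two Hankel matrices are -L L^T and
   -L T L^T.  As L is unitriangular and det T = n + 1, the determinants are
   (-1)^n and (-1)^n (n + 1). *)

Lemma sum_mul_natr_eq (R : pzSemiRingType) n (F : nat -> R) m :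
  \sum_(l < n) F l * (l == m :> nat)%:R = if (m < n)%N then F m else 0.
Proof.
rewrite -(big_ord1_eq +%R) [RHS]big_mkcond /=; apply: eq_bigr => l _.
by case: eqP; rewrite ?mulr1 ?mulr0.
Qed.

Lemma sum_mul_natr_eqS (R : pzSemiRingType) n (F : nat -> R) m :
  \sum_(l < n) F l * (l.+1 == m :> nat)%:R =
  if m is m'.+1 then (if (m' < n)%N then F m' else 0) else 0.
Proof.
case: m => [|m]; first by rewrite big1 // => l _; rewrite mulr0.
by rewrite -sum_mul_natr_eq; apply: eq_bigr => l _; rewrite eqSS.
Qed.

Definition binz (N : nat) (j : int) : nat :=
  if j is Posz m then 'C(N, m) else 0.

Lemma binzS N j : binz N.+1 j = (binz N (j - 1) + binz N j)%N.
Proof. by case: j => [[|m]|m] //=; rewrite ?bin0 // subn1 binS addnC. Qed.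

Lemma binzSS N j :
  binz N.+2 j = (binz N (j - 2) + 2 * binz N (j - 1) + binz N j)%N.
Proof. by rewrite !binzS (_ : j - 1 - 1 = j - 2); lia. Qed.

Lemma binz_odd_mid i : binz i.*2.+1 (i%:Z + 1) = binz i.*2.+1 i.
Proof.
rewrite -PoszD /= addn1 -bin_sub; last by lia.
by congr 'C(_, _); lia.
Qed.

Section Ballot.

Variable R : comPzRingType.

Definition ballot (i k : nat) : R :=
  (binz i.*2.+1 (i%:Z - k%:Z))%:R - (binz i.*2.+1 (i%:Z - k%:Z - 1))%:R.

Lemma ballot_gt i k : (i < k)%N -> ballot i k = 0.
Proof.
move=> ltik; rewrite /ballot.
have [m ->] : exists m, i%:Z - k%:Z = Negz m.
  by exists (k - i.+1)%N; rewrite NegzE; lia.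
by rewrite (_ : Negz m - 1 = Negz m.+1) ?subrr // !NegzE; lia.
Qed.

Lemma ballotnn i : ballot i i = 1.
Proof. by rewrite /ballot subrr /= bin0 subr0. Qed.

Lemma ballotS i k :
  ballot i.+1 k = (if k is k'.+1 then ballot i k' else 0) + ballot i k *+ 2
                  + ballot i k.+1.
Proof.
have Epred : (binz i.*2.+1 (i%:Z - k%:Z + 1))%:R - (binz i.*2.+1 (i%:Z - k%:Z))%:R
             = (if k is k'.+1 then ballot i k' else 0) :> R.
  case: k => [|k]; first by rewrite subr0 binz_odd_mid subrr.
  rewrite /ballot (_ : i%:Z - k.+1%:Z + 1 = i%:Z - k%:Z); last by lia.
  by rewrite (_ : i%:Z - k.+1%:Z = i%:Z - k%:Z - 1); last by lia.
rewrite -Epred /ballot doubleS binzSS (binzSS _ (_ - _ - 1)).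
rewrite (_ : i.+1%:Z - k%:Z - 2 = i%:Z - k%:Z - 1); last by lia.
rewrite (_ : i.+1%:Z - k%:Z - 1 = i%:Z - k%:Z); last by lia.
rewrite (_ : i.+1%:Z - k%:Z = i%:Z - k%:Z + 1); last by lia.
rewrite (_ : i%:Z - k.+1%:Z - 1 = i%:Z - k%:Z - 2); last by lia.
rewrite (_ : i%:Z - k.+1%:Z = i%:Z - k%:Z - 1); last by lia.
rewrite !mul2n -!addnn !natrD; ring.
Qed.

Lemma ballot_moment m : ballot m 0 = 4 * (cc m)%:R - (cc m.+1)%:R.
Proof.
rewrite /ballot /cc subr0 doubleS (_ : 'C(_, m.+1) = binz m.*2.+3 (m%:Z + 1)).
  rewrite binzSS binz_odd_mid (_ : m%:Z + 1 - 2 = m%:Z - 1); last by lia.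
  by rewrite (_ : m%:Z + 1 - 1 = m%:Z) ?natrD /=; [ring | lia].
by rewrite -PoszD addn1.
Qed.

Lemma sum_ballotS_mul a M (g : nat -> R) : (a < M)%N ->
  \sum_(0 <= k < M.+1) ballot a.+1 k * g k =
  \sum_(0 <= k < M.+1)
     (ballot a k * g k.+1 + ballot a k * g k *+ 2 + ballot a k.+1 * g k).
Proof.
move=> ltaM.
have shift : \sum_(0 <= k < M.+1) (if k is k'.+1 then ballot a k' else 0) * g k
             = \sum_(0 <= k < M.+1) ballot a k * g k.+1.
  rewrite big_nat_recl // mul0r add0r [RHS]big_nat_recr //=.
  by rewrite ballot_gt // mul0r addr0.
rewrite 2!big_split /= -shift -!big_split /=; apply: eq_bigr => k _.
by rewrite ballotS; case: k => [|k] /=; ring.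
Qed.

Definition ballot_dot (i j : nat) : R :=
  \sum_(0 <= k < i.+1) ballot i k * ballot j k.

Lemma ballot_dot_widen i j M : (i < M)%N ->
  \sum_(0 <= k < M) ballot i k * ballot j k = ballot_dot i j.
Proof.
move=> ltiM; rewrite (big_cat_nat _ (n := i.+1)) //= [X in _ + X]big_nat_cond.
rewrite [X in _ + X]big1 ?addr0 // => k /andP[/andP[ltik _] _].
by rewrite ballot_gt ?mul0r.
Qed.

(* The symmetry of the recurrence (shift down and shift up enter with the
   same weight) lets one move a step from the first argument to the second. *)
Lemma ballot_dotS i j : ballot_dot i.+1 j = ballot_dot i j.+1.
Proof.
pose M := (i + j)%N.+2.
rewrite -(@ballot_dot_widen i.+1 j M.+1) -?(@ballot_dot_widen i j.+1 M.+1);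
  try lia.
transitivity (\sum_(0 <= k < M.+1) ballot j.+1 k * ballot i k); last first.
  by apply: eq_bigr => k _; rewrite mulrC.
rewrite !sum_ballotS_mul; try lia.
by apply: eq_bigr => k _; ring.
Qed.

Lemma ballot_dotE i j : ballot_dot i j = ballot (i + j)%N 0.
Proof.
elim: i j => [|i IHi] j; last by rewrite ballot_dotS IHi addSnnS.
by rewrite /ballot_dot big_nat1 ballotnn mul1r.
Qed.

Definition ballot_mx n : 'M[R]_n := \matrix_(i, k) ballot i k.

Definition jacobi_mx n : 'M[R]_n :=
  \matrix_(l, k) ((l == k :> nat)%:R *+ 2 + (l.+1 == k :> nat)%:R
                  + (l == k.+1 :> nat)%:R).

Lemma det_ballot_mx n : \det (ballot_mx n) = 1.
Proof.
rewrite det_trig; first by rewrite big1 // => i _; rewrite mxE ballotnn.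
by apply/is_trig_mxP => i j ltij; rewrite mxE ballot_gt.
Qed.

Lemma ballot_mx_gram n :
  ballot_mx n *m (ballot_mx n)^T = \matrix_(i, j) ballot (i + j)%N 0.
Proof.
apply/matrixP => i j; rewrite !mxE.
under eq_bigr do rewrite !mxE.
by rewrite -(big_mkord xpredT (fun k => ballot i k * ballot j k))
           ballot_dot_widen ?ballot_dotE.
Qed.

Lemma mul_ballot_jacobi_mx n :
  ballot_mx n *m jacobi_mx n = \matrix_(i, k) ballot i.+1 k.
Proof.
apply/matrixP => i k; rewrite !mxE.
transitivity (\sum_(l < n) (ballot i l * (l == k :> nat)%:R *+ 2
    + ballot i l * (l.+1 == k :> nat)%:R + ballot i l * (l == k.+1 :> nat)%:R)).
  by apply: eq_bigr => l _; rewrite !mxE; ring.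
rewrite !big_split /= !sum_mul_natr_eq sum_mul_natr_eqS ltn_ord ballotS.
have -> : (if (k.+1 < n)%N then ballot i k.+1 else 0) = ballot i k.+1.
  by case: ltnP => // lenk; rewrite ballot_gt //; apply: leq_trans lenk.
by case: (nat_of_ord k) (ltn_ord k) => [|k'] ltkn /=; rewrite ?(ltnW ltkn); ring.
Qed.

Lemma ballot_mx_jacobi_gram n :
  ballot_mx n *m jacobi_mx n *m (ballot_mx n)^T
  = \matrix_(i, j) ballot (i + j)%N.+1 0.
Proof.
rewrite mul_ballot_jacobi_mx; apply/matrixP => i j; rewrite !mxE.
under eq_bigr do rewrite !mxE mulrC.
by rewrite -(big_mkord xpredT (fun k => ballot j k * ballot i.+1 k))
           ballot_dot_widen ?ballot_dotE ?addnS ?[(j + i)%N]addnC.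
Qed.

End Ballot.

Arguments ballot {R} i k.
Arguments ballot_mx {R} n.
Arguments jacobi_mx {R} n.

Section JacobiDeterminant.

Variable F : numFieldType.

(* The pivots d_i = (i+2)/(i+1) of the LU factorization of the Jacobi matrix,
   which satisfy d_0 = 2 and d_{i+1} = 2 - 1/d_i. *)
Definition jacobi_pivot (i : nat) : F := i.+2%:R / i.+1%:R.

Lemma jacobi_pivot_neq0 i : jacobi_pivot i != 0.
Proof. by rewrite mulf_neq0 ?invr_eq0 ?pnatr_eq0. Qed.

Lemma jacobi_pivotS i : jacobi_pivot i.+1 + (jacobi_pivot i)^-1 = 2.
Proof. by rewrite /jacobi_pivot invf_div; field; rewrite -natrD pnatr_eq0. Qed.

Definition jacobi_lower_mx n : 'M[F]_n :=
  \matrix_(i, j) ((i == j :> nat)%:R + (i == j.+1 :> nat)%:R * (jacobi_pivot j)^-1).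

Definition jacobi_upper_mx n : 'M[F]_n :=
  \matrix_(i, j) ((i == j :> nat)%:R * jacobi_pivot i + (i.+1 == j :> nat)%:R).

Lemma jacobi_mx_LU n : jacobi_mx n = jacobi_lower_mx n *m jacobi_upper_mx n.
Proof.
apply/matrixP => i j; rewrite !mxE; symmetry.
pose U (l : nat) := (l == j :> nat)%:R * jacobi_pivot l + (l.+1 == j :> nat)%:R.
transitivity (\sum_(l < n) (U l * (l == i :> nat)%:R
                             + (jacobi_pivot l)^-1 * U l * (l.+1 == i :> nat)%:R)).
  by apply: eq_bigr => l _; rewrite !mxE /U !(eq_sym (i : nat)); ring.
rewrite big_split /= sum_mul_natr_eq ltn_ord.
rewrite (sum_mul_natr_eqS _ (fun l => (jacobi_pivot l)^-1 * U l)).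
case: (nat_of_ord i) (ltn_ord i) => [|i'] ltin /=.
  by rewrite /U /jacobi_pivot divr1 mulr_natr !addr0.
rewrite (ltnW ltin) /U !eqSS.
transitivity ((i'.+1 == j)%:R * (jacobi_pivot i'.+1 + (jacobi_pivot i')^-1)
              + (i'.+2 == j)%:R
              + (i' == j)%:R * ((jacobi_pivot i')^-1 * jacobi_pivot i')).
  by ring.
by rewrite jacobi_pivotS mulVf ?jacobi_pivot_neq0 // mulr1 mulr_natr.
Qed.

Lemma det_jacobi_lower_mx n : \det (jacobi_lower_mx n) = 1.
Proof.
rewrite det_trig.
  by rewrite big1 // => i _; rewrite mxE eqxx ltn_eqF // mul0r addr0.
apply/is_trig_mxP => i j ltij.
by rewrite mxE !ltn_eqF ?mul0r ?addr0 // ltnW.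
Qed.

Lemma prod_jacobi_pivot n : \prod_(i < n) jacobi_pivot i = n.+1%:R.
Proof.
elim: n => [|n IHn]; first by rewrite big_ord0.
rewrite big_ord_recr /= IHn /jacobi_pivot; field.
by rewrite nat1r pnatr_eq0.
Qed.

Lemma det_jacobi_upper_mx n : \det (jacobi_upper_mx n) = n.+1%:R.
Proof.
rewrite -det_tr det_trig.
  rewrite -(prod_jacobi_pivot n); apply: eq_bigr => i _.
  by rewrite !mxE eqxx gtn_eqF // mul1r addr0.
apply/is_trig_mxP => i j ltij.
by rewrite !mxE !gtn_eqF ?mul0r ?addr0 // ltnW.
Qed.

Lemma det_jacobi_mx n : \det (@jacobi_mx F n) = n.+1%:R.
Proof.
by rewrite jacobi_mx_LU det_mulmx det_jacobi_lower_mx det_jacobi_upper_mx mul1r.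
Qed.

End JacobiDeterminant.

Section PowersRowReduction.

Variable R : comPzRingType.

Definition colsub_mx n (x : R) : 'M[R]_n :=
  \matrix_(i, j) ((i == j :> nat)%:R - x * (i.+1 == j :> nat)%:R).

Lemma det_colsub_mx n x : \det (colsub_mx n x) = 1.
Proof.
rewrite -det_tr det_trig.
  by rewrite big1 // => i _; rewrite !mxE eqxx gtn_eqF // mulr0 subr0.
apply/is_trig_mxP => i j ltij.
by rewrite !mxE !gtn_eqF ?mulr0 ?subr0 // ltnW.
Qed.

Lemma mul_colsub_mx n x (f : nat -> nat -> R) (i j : 'I_n) :
  ((\matrix_(i, j) f i j) *m colsub_mx n x) i j
  = f i j - x * (if (j : nat) is j'.+1 then f i j' else 0).
Proof.
rewrite mxE; under eq_bigr do rewrite !mxE mulrBr mulrCA.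
rewrite big_split /= sumrN -mulr_sumr (sum_mul_natr_eq _ (f i)) ltn_ord.
rewrite (sum_mul_natr_eqS _ (f i)).
by case: (nat_of_ord j) (ltn_ord j) => [|j'] // ltjn; rewrite ltnW.
Qed.

Lemma det_hankel_powers n x (a : nat -> R) :
  \det (\matrix_(i < n.+1, j < n.+1)
          (if i == 0%N :> nat then x ^+ j else a (i.-1 + j)%N))
  = \det (\matrix_(i < n, j < n) (a (i + j)%N.+1 - x * a (i + j)%N)).
Proof.
pose f i j : R := if i == 0%N then x ^+ j else a (i.-1 + j)%N.
rewrite (_ : \matrix_(i, j) _ = \matrix_(i < n.+1, j < n.+1) f i j); last first.
  by apply/matrixP => i j; rewrite !mxE.
rewrite -[LHS]mulr1 -(det_colsub_mx n.+1 x) -det_mulmx.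
rewrite (expand_det_row _ ord0) (bigD1 ord0) //= big1 => [|j ne0j].
  rewrite addr0 mul_colsub_mx /cofactor /= mulr0 subr0 expr0 !mul1r.
  congr (\det _); apply/matrixP => i j.
  by rewrite [LHS]mxE [LHS]mxE mul_colsub_mx mxE /f /= /bump !add0n add1n addnS.
have [j' ej] : exists j', nat_of_ord j = j'.+1.
  by case: j ne0j => [[|j'] ?] //= _; exists j'.
by rewrite mul_colsub_mx ej /f /= exprS subrr mul0r.
Qed.

End PowersRowReduction.

Lemma Pn_horner4 n : (Pn n).[4] = (-1) ^+ n.
Proof.
rewrite /Pn -horner_evalE -det_map_mx.
rewrite (_ : map_mx _ _ = \matrix_(i < n.+1, j < n.+1)
    (if i == 0%N :> nat then 4 ^+ j else (cc (i.-1 + j)%N)%:R)); last first.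
  apply/matrixP => i j; rewrite !mxE /= horner_evalE.
  by case: ifP => _; rewrite ?hornerXn ?hornerC.
rewrite (det_hankel_powers _ _ (fun m => (cc m)%:R)).
rewrite (_ : \matrix_(i, j) _ = - (ballot_mx n *m (ballot_mx n)^T)).
  by rewrite -scaleN1r detZ det_mulmx det_tr det_ballot_mx !mulr1.
by rewrite ballot_mx_gram; apply/matrixP => i j; rewrite !mxE ballot_moment; ring.
Qed.

Lemma P1n_horner4 n : (P1n n).[4] = (-1) ^+ n * n.+1%:R.
Proof.
rewrite /P1n -horner_evalE -det_map_mx.
rewrite (_ : map_mx _ _ = \matrix_(i < n.+1, j < n.+1)
    (if i == 0%N :> nat then 4 ^+ j else (cc (i.-1 + j)%N.+1)%:R)); last first.
  apply/matrixP => i j; rewrite !mxE /= horner_evalE.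
  case: ifP => [_|/negbT]; rewrite ?hornerXn ?hornerC //.
  by case: (nat_of_ord i).
rewrite (det_hankel_powers _ _ (fun m => (cc m.+1)%:R)).
rewrite (_ : \matrix_(i, j) _ = - (ballot_mx n *m jacobi_mx n *m (ballot_mx n)^T)).
  rewrite -scaleN1r detZ !det_mulmx det_tr det_ballot_mx det_jacobi_mx.
  by rewrite mulr1 mul1r.
rewrite ballot_mx_jacobi_gram; apply/matrixP => i j.
by rewrite !mxE ballot_moment; ring.
Qed.

Theorem lemma9p1 (n : nat) : (1 <= n)%N ->
  (tn n).[4] = 1 /\ (t1n n).[4] = (n.+1)%:R / (n.*2.+1)%:R.
Proof.
move=> _; rewrite /tn /t1n !hornerZ Pn_horner4 P1n_horner4.
have sign2 : (-1) ^+ n * (-1) ^+ n = 1 :> rat by rewrite -exprMn mulrNN mulr1 expr1n.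
split; first by [].
by rewrite mulrA [_ / _ * _]mulrAC sign2 mul1r mulrC.
Qed.
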